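(* Let $e,e',\hat e$ be events of a branching process of a parallel composition $\mathbf{A}=\mathcal{A}_1\parallel\cdots\parallel\mathcal{A}_n$ of labelled transition systems. If $e'\ll e$ and $\hat e$ is concurrent with both $e'$ and $e$, then $([e]\setminus[e'])\cap[\hat e]=\emptyset$.
   Context: A labelled transition system is $\mathcal{A}=(\Sigma,S,T,\lambda,s^0)$ with $T\subseteq S\times S$, $\lambda:T\to\Sigma$. For $\mathcal{A}_j=(\Sigma_j,S_j,T_j,\lambda_j,s^0_j)$, the parallel composition has global states in $S_1\times\cdots\times S_n$, initial state $(s^0_1,\dots,s^0_n)$, and global transitions $\mathbf{t}=(t_1,\dots,t_n)\ne(\star,\dots,\star)$ with label $a$, where $t_j$ is an $a$-transition of $\mathcal{A}_j$ if $a\in\Sigma_j$ and $t_j=\star$ otherwise; ${}^\bullet\mathbf{t}$ / $\mathbf{t}^\bullet$ are the source / target states of the $t_j\ne\star$. Branching processes of $\mathbf{A}$ are Petri nets with conditions labelled by local states and events labelled by global transitions, defined inductively: the net with conditions $b^0_1,\dots,b^0_n$ labelled $s^0_1,\dots,s^0_n$ and no events is one; if a reachable marking contains a set $M$ of conditions labelled exactly by ${}^\bullet\mathbf{t}$ and no event labelled $\mathbf{t}$ has input set $M$, adding an event labelled $\mathbf{t}$ with inputs $M$ and fresh outputs labelled by the states of $\mathbf{t}^\bullet$ gives a branching process; general branching processes are unions of such. For nodes $x,y$: $x<y$ if there is a nonempty directed arc path from $x$ to $y$; $x$ and $y$ are in conflict if there is a condition $z$ different from both from which both are reachable via paths leaving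 $z$ by different arcs; $x,y$ are concurrent if neither $x\le y$, nor $y\le x$, nor in conflict. $[e]=\{e':e'\le e\}$; $M(e)$ is the marking reached by firing exactly the events of $[e]$ from the initial marking. $e'\ll e$ (strong cause) means $e'<e$ and $b'<b$ for all $b\in M(e)\setminus M(e')$, $b'\in M(e')\setminus M(e)$. *)

From mathcomp Require Import all_boot.
From Stdlib Require Import Relations List.

Set Implicit Arguments.
Unset Strict Implicit.
Unset Printing Implicit Defensive.

(* A labelled transition system over a common action universe [Sigma]:
   alphabet Sigma_j (as a predicate), states S, transitions T \subseteq S x S,
   labelling lambda : T -> Sigma_j (given as a function on pairs that is only
   used on T), initial state s0. *)
Record lts (Sigma : Type) := LTS {
  alph : Sigma -> Prop;
  state : Type;
  trans : state -> state -> Prop;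
  lab : state -> state -> Sigma;
  lab_alph : forall s s', trans s s' -> alph (lab s s');
  init : state }.

Section BranchingProcesses.
Variables (Sigma : Type) (n : nat) (A : 'I_n -> lts Sigma).

(* Candidate global transitions: a label a and, per component, either a local
   transition (Some (s,s')) or the idle marker star (None). *)
Record gtrans := GTrans {
  glab : Sigma;
  gcomp : forall j : 'I_n, option (state (A j) * state (A j)) }.

Definition gvalid (t : gtrans) : Prop :=
  (exists j, gcomp t j <> None) /\
  forall j,
    (alph (A j) (glab t) ->
       exists p, gcomp t j = Some p /\ trans p.1 p.2 /\ @lab _ (A j) p.1 p.2 = glab t)
    /\ (~ alph (A j) (glab t) -> gcomp t j = None).

(* Canonically named nodes of branching processes: an initial condition of
   component j, the output condition of event e in component j, and the event
   labelled t with input conditions pre (listed in increasing component order). *)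
Inductive cond : Type :=
  | CInit (j : 'I_n)
  | COut (e : event) (j : 'I_n)
with event : Type :=
  | Ev (t : gtrans) (pre : list cond).

Definition etr (e : event) : gtrans := let: Ev t _ := e in t.
Definition epre (e : event) : list cond := let: Ev _ p := e in p.
Definition comp (c : cond) : 'I_n := match c with CInit j => j | COut _ j => j end.

(* Label of a condition: a local state, tagged by its component
   (local state spaces of distinct components are regarded as disjoint). *)
Definition clab (c : cond) : option {j : 'I_n & state (A j)} :=
  match c with
  | CInit j => Some (existT _ j (init (A j)))
  | COut e j => match gcomp (etr e) j with
                | Some p => Some (existT _ j p.2)
                | None => None
                end
  end.

Definition pre_ok (t : gtrans) (pre : list cond) : Prop :=
  map comp pre = [seq j <- enum 'I_n | isSome (gcomp t j)] /\
  forall c, List.In c pre ->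
    exists p, gcomp t (comp c) = Some p /\ clab c = Some (existT _ (comp c) p.1).

Definition marking := cond -> Prop.
Definition initM : marking := fun c => exists j, c = CInit j.

Definition fire (m : marking) (e : event) (m' : marking) : Prop :=
  (forall c, List.In c (epre e) -> m c) /\
  forall c, m' c <->
    ((m c /\ ~ List.In c (epre e)) \/
     (exists j, c = COut e j /\ gcomp (etr e) j <> None)).

Inductive reach (L : list event) : marking -> Prop :=
  | reach0 m : (forall c, m c <-> initM c) -> reach L m
  | reachS m e m' : reach L m -> List.In e L -> fire m e m' -> reach L m'.

Inductive fbp : list event -> Prop :=
  | fbp0 : fbp nil
  | fbpS L t pre m :
      fbp L -> gvalid t -> reach L m ->
      (forall c, List.In c pre -> m c) -> pre_ok t pre ->
      ~ List.In (Ev t pre) L ->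
      fbp (Ev t pre :: L).

Definition is_bp (P : event -> Prop) : Prop :=
  exists (I : Type) (F : I -> list event),
    (forall i, fbp (F i)) /\ forall e, P e <-> exists i, List.In e (F i).

Inductive node : Type := NC (c : cond) | NE (e : event).

Definition arc (P : event -> Prop) (x y : node) : Prop :=
  match x, y with
  | NC c, NE e => P e /\ List.In c (epre e)
  | NE e, NC c => P e /\ exists j, c = COut e j /\ gcomp (etr e) j <> None
  | _, _ => False
  end.

Definition lt_node P := clos_trans node (arc P).
Definition le_node P := clos_refl_trans node (arc P).

Definition conflict P (x y : node) : Prop :=
  exists (z : cond) (e1 e2 : event),
    NC z <> x /\ NC z <> y /\
    arc P (NC z) (NE e1) /\ arc P (NC z) (NE e2) /\ e1 <> e2 /\
    le_node P (NE e1) x /\ le_node P (NE e2) y.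

Definition concurrent P (x y : node) : Prop :=
  ~ le_node P x y /\ ~ le_node P y x /\ ~ conflict P x y.

Fixpoint fireseq (m : marking) (s : list event) (m'' : marking) : Prop :=
  match s with
  | nil => forall c, m c <-> m'' c
  | f :: s' => exists m', fire m f m' /\ fireseq m' s' m''
  end.

Definition Mark P (e : event) (m : marking) : Prop :=
  exists s : list event,
    List.NoDup s /\
    (forall f, List.In f s <-> (P f /\ le_node P (NE f) (NE e))) /\
    fireseq initM s m.

Definition strong_cause P (e' e : event) : Prop :=
  lt_node P (NE e') (NE e) /\
  exists m m', Mark P e m /\ Mark P e' m' /\
    forall b b', m b -> ~ m' b -> m' b' -> ~ m b' -> lt_node P (NC b') (NC b).

End BranchingProcesses.

(* Suppose f is in [e] but not in [e'], and f <= ê. A path from f to ê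
   leaves the down-closure of e through some arc u -> v. If u is a condition,
   it also has a consumer inside [e], so ê and e would be in conflict. If u is
   an event, then v is an output of u that lies in the cut M(e) but not in
   M(e') (u is not below e'), so strong causality gives e' < v <= ê,
   contradicting the concurrency of ê and e'. *)

From Pilot Require Import Defs.
From Stdlib Require Import Relations List Classical.
From mathcomp Require Import all_boot.

Set Implicit Arguments.
Unset Strict Implicit.
Unset Printing Implicit Defensive.

Section Firing.
Variables (Sigma : Type) (n : nat) (A : 'I_n -> lts Sigma).
Implicit Types (m : marking A) (s : list (event A)) (c : cond A) (h x : event A).

Lemma NoDup_app_disjoint (T : Type) (s1 s2 : list T) (a : T) :
  NoDup (s1 ++ s2)%list -> In a s1 -> ~ In a s2.
Proof.
move=> nd /(in_split a) [t1 [t2 Es1]] a_s2; subst s1.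
rewrite -app_assoc /= in nd.
by apply: (NoDup_remove_2 _ _ _ nd); apply: in_or_app; right; apply: in_or_app; right.
Qed.

Lemma fireseq_cat m0 s1 s2 m : fireseq m0 (s1 ++ s2)%list m ->
  exists2 mid, fireseq m0 s1 mid & fireseq mid s2 m.
Proof.
elim: s1 m0 => [|f s1 IH] m0 /=; first by exists m0.
move=> [m1 [fire_f /IH [mid s1_mid mid_m]]].
by exists mid => //; exists m1.
Qed.

Lemma fireseq_marked m0 s m c : fireseq m0 s m -> m c ->
  m0 c \/ exists h j, c = COut h j /\ In h s.
Proof.
elim: s m0 => [|f s IH] m0 /=; first by move=> eqm /eqm; left.
move=> [m1 [[_ fire_f] /IH s_m]] /s_m [/fire_f [[m0c _]|[j [-> _]]]|[h [j [-> h_s]]]].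
- by left.
- by right; exists f, j; split; first by []; left.
- by right; exists h, j; split; first by []; right.
Qed.

Lemma fireseq_keep m0 s m c : fireseq m0 s m -> m0 c ->
  (forall x, In x s -> ~ In c (epre x)) -> m c.
Proof.
elim: s m0 => [|f s IH] m0 /=; first by move=> eqm /eqm.
move=> [m1 [[_ fire_f] s_m]] m0c unconsumed.
apply: (IH m1 s_m) => [|x x_s]; last by apply: unconsumed; right.
by apply/fire_f; left; split=> //; apply: unconsumed; left.
Qed.

Lemma fireseq_out m0 s m h j : fireseq m0 s m -> In h s ->
  gcomp (etr h) j <> None ->
  (forall x, In x s -> ~ In (COut h j) (epre x)) -> m (COut h j).
Proof.
elim: s m0 => [|f s IH] m0 //= [m1 [[_ fire_f] s_m]] h_s out_j unconsumed.
have {}unconsumed x : In x s -> ~ In (COut h j) (epre x).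
  by move=> x_s; apply: unconsumed; right.
case: h_s => [eq_fh|h_s]; last exact: IH s_m h_s out_j unconsumed.
by subst f; apply: (fireseq_keep s_m) unconsumed; apply/fire_f; right; exists j.
Qed.

Lemma fireseq_unmarked_out m0 s m h j : fireseq m0 s m ->
  ~ m0 (COut h j) -> ~ In h s -> ~ m (COut h j).
Proof.
elim: s m0 => [|f s IH] m0 /=; first by move=> eqm m0c _ /eqm.
move=> [m1 [[_ fire_f] s_m]] m0c h_s; apply: (IH m1 s_m); last by tauto.
move=> /fire_f [[m1c _]|[j' [[eq_hf _] _]]]; first exact: m0c.
by apply: h_s; left.
Qed.

(* A condition that some event consumes stays unmarked, because its producer
   cannot fire a second time. *)
Lemma fireseq_consumed s m x h j : NoDup s -> fireseq (@initM _ _ A) s m ->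
  In x s -> In (COut h j) (epre x) -> ~ m (COut h j).
Proof.
move=> nd s_m /(in_split x) [s1 [s2 Es]] consumed; subst s.
have [mid s1_mid [m1 [[pre_x fire_x] s2_m]]] := fireseq_cat s_m.
have [[j0 //]|[h' [j' [[<- _] h_s1]]]] := fireseq_marked s1_mid (pre_x _ consumed).
have h_x_s2 := NoDup_app_disjoint nd h_s1.
apply: (fireseq_unmarked_out s2_m); last by move=> h_s2; apply: h_x_s2; right.
move=> /fire_x [[_ /(_ consumed)] //|[j'' [[eq_hx _] _]]].
by apply: h_x_s2; left.
Qed.

End Firing.

Section Net.
Variables (Sigma : Type) (n : nat) (A : 'I_n -> lts Sigma) (P : event A -> Prop).
Implicit Types (m : marking A) (c : cond A) (e h x y : event A) (u v w : node A).

Fixpoint event_depth e : nat :=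
  let: Ev _ pre := e in
  let cond_depth c := if c is COut e' _ then (event_depth e').+1 else 0 in
  (foldr maxn 0 (map cond_depth pre)).+1.

Definition node_depth u : nat :=
  match u with
  | NE e => event_depth e
  | NC (COut e _) => (event_depth e).+1
  | NC (CInit _) => 0
  end.

Lemma arc_depth u v : Defs.arc P u v -> node_depth u < node_depth v.
Proof.
case: u v => [c|e] [c'|[t pre]] //= [_]; last by case=> j [-> _].
elim: pre => [|c0 pre IH] //= [-> {IH}|/IH].
  by case: c => //= e' _; rewrite ltnS leq_maxl.
by move/leq_trans; apply; rewrite ltnS leq_maxr.
Qed.

Lemma lt_node_depth u v : lt_node P u v -> node_depth u < node_depth v.
Proof.
elim=> [{}u {}v /arc_depth //|{}u {}v w _ uv _ vw].
exact: ltn_trans uv vw.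
Qed.

Lemma lt_node_irrefl u : ~ lt_node P u u.
Proof. by move/lt_node_depth; rewrite ltnn. Qed.

Lemma lt_le_node_trans u v w : lt_node P u v -> le_node P v w -> lt_node P u w.
Proof.
move=> uv /(clos_rt_rtn1 _ _ _ _) vw; elim: vw => // w' w'' w'w'' _ uw'.
exact: t_trans uw' (t_step _ _ _ _ w'w'').
Qed.

Lemma le_node_exit_arc (inside : node A -> Prop) u v : le_node P u v ->
  inside u -> ~ inside v ->
  exists u' v', [/\ le_node P u u', Defs.arc P u' v', inside u', ~ inside v'
                  & le_node P v' v].
Proof.
move/(clos_rt_rt1n _ _ _ _); elim=> [w //|w w' v' ww' w'v' IH] in_w out_v'.
have [in_w'|out_w'] := classic (inside w').
  have [u' [v'' [w'u' u'v'' in_u' out_v'' v''v']]] := IH in_w' out_v'.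
  by exists u', v''; split=> //; apply: rt_trans (rt_step _ _ _ _ ww') w'u'.
by exists w, w'; split=> //; [apply: rt_refl | apply: clos_rt1n_rt w'v'].
Qed.

Lemma le_cond_event c e : le_node P (NC c) (NE e) ->
  exists2 x, Defs.arc P (NC c) (NE x) & le_node P (NE x) (NE e).
Proof.
move/(clos_rt_rt1n _ _ _ _)=> ce; inversion ce as [|y ? cy ye]; subst.
case: y cy ye => [//|x] cx xe.
by exists x => //; apply: clos_rt1n_rt.
Qed.

Lemma lt_event_out e' e : lt_node P (NE e') (NE e) ->
  exists2 j, Defs.arc P (NE e') (NC (COut e' j)) & le_node P (NC (COut e' j)) (NE e).
Proof.
move/(clos_trans_t1n _ _ _ _)=> e'e; inversion e'e as [? arc_e'e|d ? arc_e'd de]; subst.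
  by case: arc_e'e.
case: d arc_e'd de => [d|?] arc_e'd; last by case: arc_e'd.
have [_ [j [Ed _]]] := arc_e'd; subst d => de.
by exists j => //; apply: (clos_t_clos_rt _ _ _ _); apply/clos_trans_t1n_iff.
Qed.

Lemma conflict_of_branching x y c h :
  Defs.arc P (NC c) (NE h) -> le_node P (NC c) (NE y) ->
  ~ le_node P (NE h) (NE y) -> le_node P (NE h) (NE x) -> conflict P (NE x) (NE y).
Proof.
move=> ch cy hy hx; have [h' ch' h'y] := le_cond_event cy.
by exists c, h, h'; repeat split=> //; move=> eq_hh'; subst h'.
Qed.

Lemma Mark_out e m h j : Mark P e m -> P h -> le_node P (NE h) (NE e) ->
  gcomp (etr h) j <> None ->
  (forall y, Defs.arc P (NC (COut h j)) (NE y) -> ~ le_node P (NE y) (NE e)) ->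
  m (COut h j).
Proof.
move=> [s [_ [in_s s_m]]] Ph he out_j unconsumed.
apply: (fireseq_out s_m _ out_j) => [|y /in_s [Py ye] consumed]; first exact/in_s.
exact: unconsumed y (conj Py consumed) ye.
Qed.

Lemma Mark_consumed e m x h j : Mark P e m -> P x -> le_node P (NE x) (NE e) ->
  In (COut h j) (epre x) -> ~ m (COut h j).
Proof.
move=> [s [nd [in_s s_m]]] Px xe.
by apply: (fireseq_consumed nd s_m); apply/in_s.
Qed.

Lemma Mark_not_out e m h j : Mark P e m -> ~ le_node P (NE h) (NE e) ->
  ~ m (COut h j).
Proof.
move=> [s [_ [in_s s_m]]] he /(fireseq_marked s_m) [[j0 //]|[h' [j' [[<- _]]]]].
by move=> /in_s [].
Qed.

(* Compare with an output condition of e' that is consumed inside [e]: it is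
   in M(e') but not in M(e). *)
Lemma strong_cause_lt_out e' e h b : strong_cause P e' e -> P e' ->
  Defs.arc P (NE h) (NC b) -> le_node P (NE h) (NE e) -> ~ le_node P (NE h) (NE e') ->
  (forall y, Defs.arc P (NC b) (NE y) -> ~ le_node P (NE y) (NE e)) ->
  lt_node P (NE e') (NC b).
Proof.
move=> [e'e [m [m' [Me [Me' cut]]]]] Pe' [Ph [j' [-> out_j']]] he he' b_e.
have [j e'd de] := lt_event_out e'e; have [x dx xe] := le_cond_event de.
have d_m' : m' (COut e' j).
  apply: (Mark_out Me' Pe' (rt_refl _ _ _)); first by case: e'd => _ [? [[<-]]].
  move=> y e'_y ye'; apply: (@lt_node_irrefl (NE e')).
  have e'_lt_y := t_trans _ _ _ _ _ (t_step _ _ _ _ e'd) (t_step _ _ _ _ e'_y).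
  exact: lt_le_node_trans e'_lt_y ye'.
have d_m : ~ m (COut e' j) by apply: (Mark_consumed Me (proj1 dx) xe (proj2 dx)).
have b_m := Mark_out Me Ph he out_j' b_e.
have b_m' : ~ m' (COut h j') by apply: Mark_not_out Me' he'.
exact: t_trans (t_step _ _ _ _ e'd) (cut _ _ b_m b_m' d_m' d_m).
Qed.

End Net.

Theorem lemma2 (Sigma : Type) (n : nat) (A : 'I_n -> lts Sigma)
    (P : event A -> Prop) (e e' eh : event A) :
  is_bp P -> P e -> P e' -> P eh ->
  strong_cause P e' e ->
  concurrent P (NE eh) (NE e') -> concurrent P (NE eh) (NE e) ->
  forall f : event A, P f ->
    le_node P (NE f) (NE e) -> ~ le_node P (NE f) (NE e') ->
    ~ le_node P (NE f) (NE eh).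
Proof.
move=> _ _ Pe' _ e'_e [_ [e'_eh _]] [eh_e [_ no_conflict]] f _ fe fe' f_eh.
have [u [v [fu uv ue ve v_eh]]] :=
  le_node_exit_arc (inside := fun z => le_node P z (NE e)) f_eh fe eh_e.
case: u v uv ue ve fu v_eh => [c|h] [b|h'] uv ue ve fu v_eh //.
  exact: no_conflict (conflict_of_branching uv ue ve v_eh).
apply: e'_eh; apply: (clos_t_clos_rt _ _ _ _); apply: lt_le_node_trans v_eh.
apply: (strong_cause_lt_out e'_e Pe' uv ue) => [he'|y b_y ye].
  by apply: fe'; apply: rt_trans fu he'.
by apply: ve; apply: rt_trans (rt_step _ _ _ _ b_y) ye.
Qed.
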